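(* (a) Let $n\ge3$ be odd, $a_0,\dots,a_{n-1}\in\mathbb{R}$ with $a_0<0$, $a_k>0$ for $k\ne0$, and $a_0+a_2<0$, and let $\mathcal A(x)=\det(xI-A')$ where $A'$ is the $n\times n$ matrix with $(A')_{j,j+1}=a_{j+1}$, $(A')_{j,j-1}=-a_{j-1}$ (indices mod $n$), other entries zero. Then there exists $x_2^*>\sqrt{-a_1(a_0+a_2)}$ with $\mathcal A(x_2^* )=0$. (b) Let $\alpha\le-1$, $\beta\ge1$ be integers and $a_k\in\mathbb{R}$ for $\alpha\le k\le\max(\beta,2)$ with $a_0<0$, $a_k>0$ for $k\ne0$, and $a_0+a_2<0$; let $\mathcal T_\alpha^\beta(x)=\det(xI-M)$ where $M$ is indexed by $\alpha,\dots,\beta$ with $M_{j,j+1}=a_{j+1}$, $M_{j,j-1}=-a_{j-1}$, other entries zero. Then there exists $x_1^*>\sqrt{-a_1(a_0+a_2)}$ with $\mathcal T_\alpha^\beta(x_1^* )=0$. *)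

From HB Require Import structures.
From mathcomp Require Import all_boot all_order all_algebra.
From mathcomp Require Import reals.
Set Implicit Arguments. Unset Strict Implicit. Unset Printing Implicit Defensive.
Import Order.TTheory GRing.Theory Num.Theory.
Local Open Scope ring_scope.

(* Cyclic matrix A' of size n (indices 0..n-1, taken mod n):
   (A')_{j,j+1} = a_{j+1}, (A')_{j,j-1} = - a_{j-1}, other entries 0.
   Equivalently entry (i,j) is a_j if j = i+1 mod n, -a_j if j = i-1 mod n. *)
Definition cycA {R : ringType} (n : nat) (a : nat -> R) : 'M[R]_n :=
  \matrix_(i < n, j < n)
     if (i.+1 %% n == j)%N then a j
     else if (j.+1 %% n == i)%N then - a j else 0.

(* Tridiagonal matrix M indexed by alpha..beta (alpha, beta : int); the
   row/column index i : 'I_(|beta - alpha| + 1) stands for alpha + i. *)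
Definition triM {R : ringType} (alpha beta : int) (a : int -> R) :
  'M[R]_((`|beta - alpha|).+1) :=
  \matrix_(i, j)
     if (i.+1 == j)%N then a (alpha + (j : nat)%:Z)
     else if (j.+1 == i)%N then - a (alpha + (j : nat)%:Z) else 0.

From HB Require Import structures.
From mathcomp Require Import all_boot all_order all_algebra.
From mathcomp Require Import reals.
From mathcomp Require Import polyrcf zify ring lra.
Import Order.TTheory GRing.Theory Num.Theory.
Local Open Scope ring_scope.

Set Implicit Arguments. Unset Strict Implicit. Unset Printing Implicit Defensive.

(* Let c = sqrt(-a_1 (a_0 + a_2)) > 0.  Characteristic polynomials are monic, so
   by the intermediate value theorem it suffices to show det (c I - M) < 0.
   Here c I - M is tridiagonal with constant diagonal c, and its principal
   minors D satisfy the continuant recurrence D = c D' + a_j a_(j+1) D''; they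
   are positive while every product a_j a_(j+1) involved is positive.  The only
   negative products are a_(-1) a_0 and a_0 a_1, and c^2 + a_1 a_2 = -a_0 a_1
   makes the minor starting at a_0 nonpositive, after which the recurrence
   forces every larger minor, down to the full determinant, to be negative.
   For the cyclic matrix of odd size the two corner products a_0 ... a_(n-1)
   of the periodic expansion cancel, leaving the continuant (<= 0 by the same
   argument) plus a_0 a_(n-1) times a positive minor. *)

Section SquareMatrixOfFunction.
Variable R : comPzRingType.
Implicit Types (f : nat -> nat -> R) (k s : nat).

Definition sqmx k f : 'M[R]_k := \matrix_(i < k, j < k) f i j.

Definition shiftf s f i j := f (i + s)%N (j + s)%N.

Lemma eq_sqmx k f g : (forall i j, (i < k)%N -> (j < k)%N -> f i j = g i j) ->
  sqmx k f = sqmx k g.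
Proof. by move=> fg; apply/matrixP => i j; rewrite !mxE fg. Qed.

Lemma sqmx_shiftf0 k f : sqmx k (shiftf 0 f) = sqmx k f.
Proof. by apply: eq_sqmx => i j _ _; rewrite /shiftf !addn0. Qed.

Lemma det_sqmx_tr k f : \det (sqmx k f) = \det (sqmx k (fun i j => f j i)).
Proof. by rewrite -det_tr; congr (\det _); apply/matrixP => i j; rewrite !mxE. Qed.

Lemma eq_det_sqmx_tr k f g : (forall i j, (i < k)%N -> (j < k)%N -> f i j = g j i) ->
  \det (sqmx k f) = \det (sqmx k g).
Proof. by move=> fg; rewrite det_sqmx_tr; congr (\det _); apply: eq_sqmx => i j ik jk; exact: fg. Qed.

Lemma expand_det_sqmx_row0 k f : \det (sqmx k.+1 f) =
  \sum_(j < k.+1) f 0%N j * ((-1) ^+ j * \det (sqmx k (fun i l => f i.+1 (bump j l)))).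
Proof.
rewrite (expand_det_row _ ord0); apply: eq_bigr => j _; rewrite mxE /cofactor add0n.
by congr (_ * (_ * \det _)); apply/matrixP => i l; rewrite !mxE lift0.
Qed.

Lemma det_sqmx_lower k f : (forall i j, (i < j < k)%N -> f i j = 0) ->
  \det (sqmx k f) = \prod_(i < k) f i i.
Proof.
move=> f_up; rewrite det_trig; first by apply: eq_bigr => i _; rewrite mxE.
by apply/is_trig_mxP => i j ij; rewrite mxE f_up // ij ltn_ord.
Qed.

Lemma det_sqmx_upper k f : (forall i j, (j < i < k)%N -> f i j = 0) ->
  \det (sqmx k f) = \prod_(i < k) f i i.
Proof. by move=> f_lo; rewrite det_sqmx_tr det_sqmx_lower // => i j /f_lo. Qed.

Lemma bump_lt h i : (i < h)%N -> bump h i = i.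
Proof. by rewrite /bump ltnNge => /negbTE ->. Qed.

Lemma bump_ge h i : (h <= i)%N -> bump h i = i.+1.
Proof. by rewrite /bump => ->; rewrite add1n. Qed.

Lemma bump0 i : bump 0 i = i.+1.
Proof. exact: bump_ge. Qed.

Lemma expand_det_sqmx_col0_ends k f : (forall i, (0 < i < k.+1)%N -> f i 0%N = 0) ->
  \det (sqmx k.+2 f) = f 0%N 0%N * \det (sqmx k.+1 (shiftf 1 f))
    + (-1) ^+ k.+1 * f k.+1 0%N * \det (sqmx k.+1 (fun i j => f i j.+1)).
Proof.
move=> f_col0; rewrite det_sqmx_tr expand_det_sqmx_row0 big_ord_recl big_ord_recr /=.
rewrite big1 ?add0r => [|j _]; last first.
  by rewrite f_col0 ?mul0r // bump_ge //; have := ltn_ord j; clear; lia.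
rewrite (@bump_ge 0 k) // expr0 mul1r mulrCA mulrA.
congr (_ * _ + _ * _); apply: eq_det_sqmx_tr => i j _ lt_jk.
  by rewrite /shiftf bump_ge // !addn1.
by rewrite bump_lt.
Qed.

Lemma det_sqmx_tridiag_rec k f :
  (forall j, (1 < j < k.+2)%N -> f 0%N j = 0) ->
  (forall i, (1 < i < k.+2)%N -> f i 0%N = 0) ->
  \det (sqmx k.+2 f) = f 0%N 0%N * \det (sqmx k.+1 (shiftf 1 f))
     - f 0%N 1%N * f 1%N 0%N * \det (sqmx k (shiftf 2 f)).
Proof.
move=> f_row0 f_col0; rewrite expand_det_sqmx_row0 !big_ord_recl big1 ?addr0 => [|j _]; last first.
  by rewrite f_row0 ?mul0r // !lift0; have := ltn_ord j; clear; lia.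
rewrite /= expr0 expr1 mul1r mulN1r mulrN -mulrA; congr (_ * _ - _ * _).
  by congr (\det _); apply: eq_sqmx => i j _ _; rewrite /shiftf bump_ge // !addn1.
rewrite det_sqmx_tr expand_det_sqmx_row0 big_ord_recl big1 ?addr0 => [|j _]; last first.
  by rewrite lift0 f_col0 ?mul0r //; have := ltn_ord j; clear; lia.
rewrite /= expr0 mul1r; congr (_ * _); apply: eq_det_sqmx_tr => i j _ _.
by rewrite /shiftf !bump_ge // !addn2.
Qed.

Lemma det_sqmx_periodic k f :
  (forall i j, (i.+1 < j < k.+3)%N -> (0 < i)%N || (j < k.+2)%N -> f i j = 0) ->
  (forall i j, (j.+1 < i < k.+3)%N -> (0 < j)%N || (i < k.+2)%N -> f i j = 0) ->
  \det (sqmx k.+3 f) = f 0%N 0%N * \det (sqmx k.+2 (shiftf 1 f))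
    - f 0%N 1%N * f 1%N 0%N * \det (sqmx k.+1 (shiftf 2 f))
    - f 0%N k.+2 * f k.+2 0%N * \det (sqmx k.+1 (shiftf 1 f))
    + (-1) ^+ k * (f k.+2 0%N * \prod_(i < k.+2) f i i.+1
                   + f 0%N k.+2 * \prod_(i < k.+2) f i.+1 i).
Proof.
move=> f_up f_lo.
have minor1 : \det (sqmx k.+2 (fun i l => f i.+1 (bump 1 l))) =
    f 1%N 0%N * \det (sqmx k.+1 (shiftf 2 f))
    + (-1) ^+ k.+1 * f k.+2 0%N * \prod_(i < k.+1) f i.+1 i.+2.
  rewrite expand_det_sqmx_col0_ends => [|i /andP[i_gt0 i_lt]]; last first.
    by rewrite bump_lt // f_lo //; clear -i_gt0 i_lt; lia.
  rewrite (@bump_lt 1 0) //; congr (_ * \det _ + _ * _).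
    by apply: eq_sqmx => i j _ _; rewrite /shiftf !addn1 !addn2 bump_ge.
  rewrite det_sqmx_lower => [|i j /andP[ij jk]]; last first.
    by rewrite bump_ge // f_up //; clear -ij jk; lia.
  by apply: eq_bigr => i _; rewrite bump_ge.
have minor_last : \det (sqmx k.+2 (fun i l => f i.+1 (bump k.+2 l))) =
    f 1%N 0%N * \prod_(i < k.+1) f i.+2 i.+1
    + (-1) ^+ k.+1 * f k.+2 0%N * \det (sqmx k.+1 (shiftf 1 f)).
  rewrite (eq_sqmx (g := fun i l => f i.+1 l)) => [|i l _ lt_l]; last by rewrite bump_lt.
  rewrite expand_det_sqmx_col0_ends => [|i /andP[i_gt0 i_lt]]; last first.
    by rewrite f_lo //; clear -i_gt0 i_lt; lia.
  congr (_ * _ + _ * _); last by congr (\det _); apply: eq_sqmx => i j _ _; rewrite /shiftf !addn1.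
  rewrite det_sqmx_upper => [|i j /andP[ji ik]]; last first.
    by rewrite /shiftf f_lo //; clear -ji ik; lia.
  by apply: eq_bigr => i _; rewrite /shiftf !addn1.
rewrite expand_det_sqmx_row0 (big_ord_recl k.+2) big_ord_recl big_ord_recr /=.
rewrite big1 ?add0r => [|j _]; last first.
  by rewrite f_up ?mul0r // !bump0; have := ltn_ord j; clear; lia.
rewrite !bump0 expr0 mul1r minor1 minor_last.
have minor0 : \det (sqmx k.+2 (fun i l => f i.+1 (bump 0 l))) = \det (sqmx k.+2 (shiftf 1 f)).
  by congr (\det _); apply: eq_sqmx => i j _ _; rewrite /shiftf bump0 !addn1.
rewrite minor0 (big_ord_recl k.+1 (fun i => f i i.+1)) (big_ord_recl k.+1 (fun i => f i.+1 i)).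
(* [ring] cannot use ((-1) ^+ k) ^+ 2 = 1, so split on the parity of k. *)
rewrite -[(-1) ^+ k.+2]signr_odd -[(-1) ^+ k.+1]signr_odd -[(-1) ^+ k]signr_odd /= negbK.
case: (odd k); rewrite /= ?expr0 ?expr1; ring.
Qed.
End SquareMatrixOfFunction.

Definition coupling {R : pzRingType} (g : nat -> nat -> R) i := - (g i i.+1 * g i.+1 i).

Section Continuant.
Variables (R : realFieldType) (x : R) (g : nat -> nat -> R).
Hypothesis g_diag : forall i, g i i = x.
Hypothesis g_band : forall i j, (i.+1 < j)%N \/ (j.+1 < i)%N -> g i j = 0.

Local Notation coupling := (coupling g).
Local Notation D s k := (\det (sqmx k (shiftf s g))).

Lemma continuant1 s : D s 1 = x.
Proof. by rewrite det_mx11 mxE /shiftf g_diag. Qed.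

Lemma continuant_rec s k : D s k.+2 = x * D s.+1 k.+1 + coupling s * D s.+2 k.
Proof.
rewrite det_sqmx_tridiag_rec => [|j /andP[j_gt1 _]|i /andP[i_gt1 _]]; last 2 first.
- by rewrite /shiftf g_band //; lia.
- by rewrite /shiftf g_band //; lia.
rewrite {1 2 3 4 5}/shiftf /coupling add0n add1n g_diag mulNr.
by congr (_ * _ - _ * _); congr (\det _); apply: eq_sqmx => i j _ _; rewrite /shiftf -!addnA.
Qed.

Hypothesis x_gt0 : 0 < x.

Lemma continuant_gt0 s k :
  (forall i, (s <= i)%N -> (i.+2 <= s + k)%N -> 0 <= coupling i) -> 0 < D s k.
Proof.
elim/ltn_ind: k s => -[|[|k]] IH s q_ge0; first by rewrite det_mx00.
  by rewrite continuant1.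
have q_s : 0 <= coupling s by apply: q_ge0; lia.
have D1 : 0 < D s.+1 k.+1 by apply: IH => // i *; apply: q_ge0; lia.
have D2 : 0 < D s.+2 k by apply: IH => // i *; apply: q_ge0; lia.
have := mulr_gt0 x_gt0 D1; have := mulr_ge0 q_s (ltW D2); rewrite continuant_rec; lra.
Qed.

Lemma continuant_ge s k :
  (forall i, (s <= i)%N -> (i.+2 <= s + k.+1)%N -> 0 <= coupling i) ->
  x * D s.+1 k <= D s k.+1.
Proof.
case: k => [|k] q_ge0; first by rewrite det_mx00 continuant1 mulr1.
have q_s : 0 <= coupling s by apply: q_ge0; lia.
have D2 : 0 < D s.+2 k by apply: continuant_gt0 => i *; apply: q_ge0; lia.
by rewrite continuant_rec lerDl mulr_ge0 // ltW.
Qed.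

Lemma continuant_le0 s k :
  (forall i, (s < i)%N -> (i <= s + k)%N -> 0 <= coupling i) ->
  0 <= coupling s.+1 -> x ^+ 2 + coupling s.+1 <= - coupling s ->
  D s k.+2 <= 0.
Proof.
move=> q_ge0 q_s1 x2_le.
have D2 : 0 < D s.+2 k by apply: continuant_gt0 => i *; apply: q_ge0; lia.
suff : x * D s.+1 k.+1 <= (x ^+ 2 + coupling s.+1) * D s.+2 k.
  by rewrite continuant_rec; have := ler_wpM2r (ltW D2) x2_le; lra.
case: k q_ge0 D2 => [|k] q_ge0 D2.
  by rewrite det_mx00 continuant1 mulr1 expr2 lerDl.
have D3 : x * D s.+3 k <= D s.+2 k.+1 by apply: continuant_ge => i *; apply: q_ge0; lia.
rewrite continuant_rec mulrDr mulrA -expr2 mulrDl lerD2l mulrCA.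
by rewrite ler_wpM2l.
Qed.

Lemma continuant_lt0_down s k :
  (forall i, (i < s)%N -> 0 <= coupling i) ->
  D s.+1 k <= 0 -> D s k.+1 < 0 -> D 0 (s + k.+1) < 0.
Proof.
elim: s k => [|s IH] k q_ge0 Ds1 Ds //.
rewrite addSnnS; apply: IH => [i i_lt||]; first by apply: q_ge0; lia.
  exact: ltW.
have q_s : 0 <= coupling s by apply: q_ge0.
have := pmulr_rlt0 (D s.+1 k.+1) x_gt0; have := mulr_ge0_le0 q_s Ds1; rewrite continuant_rec Ds; lra.
Qed.
End Continuant.

Lemma horner_char_poly (R : comNzRingType) n (A : 'M[R]_n) c :
  (char_poly A).[c] = \det (c%:M - A).
Proof.
rewrite /char_poly -horner_evalE -det_map_mx; congr (\det _).
by apply/matrixP => i j; rewrite !mxE rmorphB /= !horner_evalE hornerMn hornerX hornerC.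
Qed.

Lemma char_poly_root_gt (R : rcfType) n (A : 'M[R]_n) c :
  \det (c%:M - A) < 0 -> exists x, c < x /\ root (char_poly A) x.
Proof.
move=> det_lt0; have lc1 : lead_coef (char_poly A) = 1 by apply/monicP/char_poly_monic.
have [M geM] : exists M, forall x, M <= x -> 1 <= (char_poly A).[x].
  by rewrite -lc1; apply: poly_pinfty_gt_lc; rewrite lc1 ltr01.
set b := Num.max M (c + 1).
have pb_ge1 : 1 <= (char_poly A).[b] by apply: geM; rewrite le_max lexx.
have le_cb : c <= b by rewrite le_max; apply/orP; right; lra.
have [x /andP[le_cx _] root_x] : exists2 x, c <= x <= b & root (char_poly A) x.
  by apply: poly_ivt le_cb _; rewrite horner_char_poly; nra.
exists x; split => //; rewrite lt_neqAle le_cx andbT; apply: contraTneq root_x => <-.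
by rewrite rootE horner_char_poly lt_eqF.
Qed.

Definition char_tridiag {R : pzRingType} (c : R) (b : nat -> R) (i j : nat) : R :=
  c *+ (i == j) - (if i.+1 == j then b j else if j.+1 == i then - b j else 0).

Section CharTridiag.
Variables (R : pzRingType) (c : R) (b : nat -> R).

Lemma char_tridiag_diag i : char_tridiag c b i i = c.
Proof. by rewrite /char_tridiag eqxx gtn_eqF // subr0. Qed.

Lemma char_tridiag_band i j : (i.+1 < j)%N \/ (j.+1 < i)%N -> char_tridiag c b i j = 0.
Proof.
by move=> ij; rewrite /char_tridiag; do ![case: eqP => ? //=; first by exfalso; lia]; rewrite subr0.
Qed.

Lemma char_tridiag_sup i : char_tridiag c b i i.+1 = - b i.+1.
Proof. by rewrite /char_tridiag eqxx (ltn_eqF (ltnSn i)) /= mulr0n sub0r. Qed.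

Lemma char_tridiag_sub i : char_tridiag c b i.+1 i = b i.
Proof.
rewrite /char_tridiag (gtn_eqF (ltnSn i)) (gtn_eqF (leqW (ltnSn i))) eqxx /=.
by rewrite mulr0n sub0r opprK.
Qed.

Lemma coupling_char_tridiag i : coupling (char_tridiag c b) i = b i.+1 * b i.
Proof. by rewrite /coupling char_tridiag_sup char_tridiag_sub mulNr opprK. Qed.
End CharTridiag.

Lemma det_char_tridiag_lt0 (R : realFieldType) (c : R) (b : nat -> R) m k :
  0 < c -> b m.+1 < 0 ->
  (forall j, (j < m + k.+3)%N -> j != m.+1 -> 0 < b j) -> 0 < b m.+3 ->
  c ^+ 2 <= - (b m.+2 * (b m.+1 + b m.+3)) ->
  \det (sqmx (m + k.+3) (char_tridiag c b)) < 0.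
Proof.
move=> c_gt0 bm1_lt0 b_gt0 bm3_gt0 c2_le.
have g_diag := char_tridiag_diag c b; have g_band := char_tridiag_band c b.
have q_ge0 i : (i.+1 < m + k.+3)%N -> i != m -> i != m.+1 ->
    0 <= coupling (char_tridiag c b) i.
  move=> i_lt i_m i_m1; rewrite coupling_char_tridiag ltW // mulr_gt0 // b_gt0 //.
  exact: ltnW.
have bm2_gt0 : 0 < b m.+2 by apply: b_gt0; lia.
have D1_le0 : \det (sqmx k.+2 (shiftf m.+1 (char_tridiag c b))) <= 0.
  apply: (continuant_le0 g_diag g_band c_gt0) => [i *||]; first by apply: q_ge0; lia.
    by rewrite coupling_char_tridiag ltW // mulr_gt0.
  by rewrite !coupling_char_tridiag; lra.
have D2_gt0 : 0 < \det (sqmx k.+1 (shiftf m.+2 (char_tridiag c b))).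
  by apply: (continuant_gt0 g_diag g_band c_gt0) => i *; apply: q_ge0; lia.
have qm_lt0 : coupling (char_tridiag c b) m < 0.
  by rewrite coupling_char_tridiag pmulr_llt0 // b_gt0 //; lia.
rewrite -(sqmx_shiftf0 _ (char_tridiag c b)).
apply: (continuant_lt0_down g_diag g_band c_gt0 _ D1_le0) => [i i_lt|].
  by apply: q_ge0; lia.
rewrite (continuant_rec g_diag g_band).
have : c * \det (sqmx k.+2 (shiftf m.+1 (char_tridiag c b))) <= 0 by rewrite pmulr_rle0.
have : coupling (char_tridiag c b) m * \det (sqmx k.+1 (shiftf m.+2 (char_tridiag c b))) < 0.
  by rewrite pmulr_llt0.
lra.
Qed.

Lemma succ_modn_eq n i j : (i < n.+1)%N -> (j < n.+1)%N ->
  (i.+1 %% n.+1 == j)%N = (i.+1 == j) || (i == n) && (j == 0%N).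
Proof.
move=> i_lt j_lt; have [->|i_n] := eqVneq i n; first by rewrite modnn (gtn_eqF j_lt) eq_sym.
by rewrite modn_small ?orbF //; lia.
Qed.

Lemma det_char_cycA (R : comNzRingType) (c : R) (a : nat -> R) k : ~~ odd k ->
  \det (c%:M - cycA k.+3 a) = \det (sqmx k.+3 (char_tridiag c a))
     + a 0%N * a k.+2 * \det (sqmx k.+1 (shiftf 1 (char_tridiag c a))).
Proof.
move=> k_even.
pose f i j := c *+ (i == j) - (if (i.+1 == j) || (i == k.+2) && (j == 0%N) then a j
  else if (j.+1 == i) || (j == k.+2) && (i == 0%N) then - a j else 0).
have -> : c%:M - cycA k.+3 a = sqmx k.+3 f.
  by apply/matrixP => i j; rewrite !mxE !succ_modn_eq.
rewrite (@det_sqmx_periodic _ k f) => [|i j /andP[ij jk] ik|i j /andP[ji ik] jk]; last 2 first.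
- rewrite /f; clear -ij jk ik; do ![case: eqP => ?]; rewrite /= ?mulr0n ?subr0 //; exfalso; lia.
- rewrite /f; clear -ji ik jk; do ![case: eqP => ?]; rewrite /= ?mulr0n ?subr0 //; exfalso; lia.
have f_sup i : f i i.+1 = - a i.+1.
  by rewrite /f eqxx (ltn_eqF (ltnSn i)) /= mulr0n sub0r.
have f_sub i : f i.+1 i = a i.
  rewrite /f (gtn_eqF (ltnSn i)) (gtn_eqF (leqW (ltnSn i))) eqxx /=.
  by case: i => [|i]; rewrite /= ?andbF mulr0n sub0r opprK.
have f00 : f 0%N 0%N = c by rewrite /f /= mulr1n subr0.
have f_lo_corner : f k.+2 0%N = - a 0%N by rewrite /f /= eqxx /= mulr0n sub0r.
have f_up_corner : f 0%N k.+2 = a k.+2 by rewrite /f /= eqxx /= mulr0n sub0r opprK.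
have f_shift s n : (0 < s)%N -> sqmx n (shiftf s f) = sqmx n (shiftf s (char_tridiag c a)).
  move=> s_gt0; apply: eq_sqmx => i j _ _.
  by rewrite /shiftf /f /char_tridiag !addn_eq0 [s == 0%N]eqn0Ngt s_gt0 !andbF !orbF.
have prod_a : a 0%N * \prod_(i < k.+2) a i.+1 = a k.+2 * \prod_(i < k.+2) a i.
  by rewrite -(big_ord_recl _ (fun i => a i)) big_ord_recr mulrC.
rewrite f00 f_sup f_sub f_lo_corner f_up_corner !f_shift //.
rewrite (eq_bigr (fun i : 'I_k.+2 => - a i.+1) (fun i _ => f_sup i)).
rewrite (eq_bigr (fun i : 'I_k.+2 => a i) (fun i _ => f_sub i)).
have prod_neg : \prod_(i < k.+2) - a i.+1 = \prod_(i < k.+2) a i.+1.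
  by rewrite prodrN card_ord -signr_odd /= negbK (negbTE k_even) mul1r.
rewrite (@det_sqmx_tridiag_rec _ k.+1 (char_tridiag c a)) => [|j|i]; last 2 first.
- by move=> /andP[j_gt1 _]; apply: char_tridiag_band; lia.
- by move=> /andP[i_gt1 _]; apply: char_tridiag_band; lia.
rewrite char_tridiag_diag char_tridiag_sup char_tridiag_sub.
rewrite prod_neg -signr_odd (negbTE k_even) expr0 mul1r [- a 0%N * _]mulNr prod_a; ring.
Qed.

Lemma det_char_cycA_lt0 (R : realFieldType) (c : R) (a : nat -> R) k :
  ~~ odd k -> 0 < c -> a 0%N < 0 -> (forall j, (0 < j < k.+3)%N -> 0 < a j) ->
  c ^+ 2 <= - (a 1%N * (a 0%N + a 2%N)) ->
  \det (c%:M - cycA k.+3 a) < 0.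
Proof.
move=> k_even c_gt0 a0_lt0 a_gt0 c2_le.
have g_diag := char_tridiag_diag c a; have g_band := char_tridiag_band c a.
have q_ge0 i : (0 < i)%N -> (i.+1 < k.+3)%N -> 0 <= coupling (char_tridiag c a) i.
  by move=> i_gt0 i_lt; rewrite coupling_char_tridiag ltW // mulr_gt0 // a_gt0 //; lia.
have a1_gt0 : 0 < a 1%N by apply: a_gt0.
have a2_gt0 : 0 < a 2%N by apply: a_gt0.
have D0_le0 : \det (sqmx k.+3 (char_tridiag c a)) <= 0.
  rewrite -(sqmx_shiftf0 _ (char_tridiag c a)).
  apply: (continuant_le0 g_diag g_band c_gt0) => [i *||]; first by apply: q_ge0; lia.
    exact: q_ge0.
  by rewrite !coupling_char_tridiag; lra.
have D1_gt0 : 0 < \det (sqmx k.+1 (shiftf 1 (char_tridiag c a))).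
  by apply: (continuant_gt0 g_diag g_band c_gt0) => i *; apply: q_ge0; lia.
have : a 0%N * a k.+2 * \det (sqmx k.+1 (shiftf 1 (char_tridiag c a))) < 0.
  have ak2_gt0 : 0 < a k.+2 by apply: a_gt0; rewrite /= ltnSn.
  by rewrite pmulr_llt0 // pmulr_llt0.
rewrite det_char_cycA //; lra.
Qed.

Lemma cycA_char_poly_root_gt (R : rcfType) (n : nat) (a : nat -> R) :
  (3 <= n)%N -> odd n -> a 0%N < 0 ->
  (forall k : nat, (k < n)%N -> k != 0%N -> 0 < a k) ->
  a 0%N + a 2%N < 0 ->
  exists x, Num.sqrt (- (a 1%N * (a 0%N + a 2%N))) < x /\ root (char_poly (cycA n a)) x.
Proof.
case: n => [|[|[|k]]] // _ n_odd a0_lt0 a_gt0 a02_lt0.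
have d_gt0 : 0 < - (a 1%N * (a 0%N + a 2%N)) by rewrite oppr_gt0 pmulr_rlt0 ?a_gt0.
apply/char_poly_root_gt/det_char_cycA_lt0 => //.
- by move: n_odd; rewrite /= negbK.
- by rewrite sqrtr_gt0.
- by move=> j /andP[j_gt0 j_lt]; apply: a_gt0; rewrite // -lt0n.
- by rewrite sqr_sqrtr // ltW.
Qed.

Lemma triM_char_poly_root_gt (R : rcfType) (alpha beta : int) (a : int -> R) :
  alpha <= -1 -> 1 <= beta -> a 0 < 0 ->
  (forall k : int, alpha <= k -> k <= Num.max beta 2 -> k != 0 -> 0 < a k) ->
  a 0 + a 2 < 0 ->
  exists x, Num.sqrt (- (a 1 * (a 0 + a 2))) < x /\ root (char_poly (triM alpha beta a)) x.
Proof.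
case: alpha => [//|m] _; case: beta => [[//|k]|//] _ a0_lt0 a_gt0 a02_lt0.
pose b j := a (Negz m + j%:Z).
have [bm1 bm2 bm3] : [/\ b m.+1 = a 0, b m.+2 = a 1 & b m.+3 = a 2].
  by rewrite /b NegzE; split; congr a; lia.
have b_gt0 j : (j < m + k.+3)%N -> j != m.+1 -> 0 < b j.
  move=> j_lt /eqP j_ne; apply: a_gt0; rewrite NegzE ?le_max; first by lia.
    by apply/orP; left; lia.
  by apply/eqP; lia.
have d_gt0 : 0 < - (a 1 * (a 0 + a 2)).
  by rewrite oppr_gt0 pmulr_rlt0 // -bm2 b_gt0 //; lia.
set c := Num.sqrt _; apply: char_poly_root_gt.
have -> : c%:M - triM (Negz m) k.+1 a = sqmx _ (char_tridiag c b).
  by apply/matrixP => i j; rewrite !mxE.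
have -> : (`|Posz k.+1 - Negz m|.+1 = m + k.+3)%N by rewrite NegzE; lia.
apply: det_char_tridiag_lt0; rewrite ?bm1 ?bm2 ?bm3 //.
- by rewrite sqrtr_gt0.
- by apply: a_gt0; rewrite // le_max lexx orbT.
- by rewrite sqr_sqrtr // ltW.
Qed.

Theorem lemma4 (R : realType) :
  (forall (n : nat) (a : nat -> R),
     (3 <= n)%N -> odd n ->
     a 0%N < 0 ->
     (forall k : nat, (k < n)%N -> k != 0%N -> 0 < a k) ->
     a 0%N + a 2%N < 0 ->
     exists x2 : R, Num.sqrt (- (a 1%N * (a 0%N + a 2%N))) < x2 /\
                    root (char_poly (cycA n a)) x2)
  /\
  (forall (alpha beta : int) (a : int -> R),
     alpha <= -1 -> 1 <= beta ->
     a 0 < 0 ->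
     (forall k : int, alpha <= k -> k <= Num.max beta 2 -> k != 0 -> 0 < a k) ->
     a 0 + a 2 < 0 ->
     exists x1 : R, Num.sqrt (- (a 1 * (a 0 + a 2))) < x1 /\
                    root (char_poly (triM alpha beta a)) x1).
Proof.
split; [exact: cycA_char_poly_root_gt | exact: triM_char_poly_root_gt].
Qed.
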